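(* Let $n,k$ be positive integers and let $\mathscr{K}_{n,k}$ be the family of all graphs with at most $n$ vertices that are disjoint unions of cliques, each clique having at most $k$ vertices. Then \[ \mathscr{U}(\mathscr{K}_{n,k}) ~=~ \sum_{i=1}^k \left\lfloor \frac{n}{i} \right\rfloor ~\ge~ (n+1)\ln(k+1) - k . \]
   Context: All graphs are finite and simple. A graph $U$ is an induced-universal graph for a family $\mathscr{F}$ of graphs if every graph of $\mathscr{F}$ is isomorphic to an induced subgraph of $U$. $\mathscr{U}(\mathscr{F})$ denotes the smallest number of vertices of an induced-universal graph for $\mathscr{F}$. *)

From mathcomp Require Import all_boot.
From Stdlib Require Import Reals.
Set Implicit Arguments. Unset Strict Implicit. Unset Printing Implicit Defensive.

Definition simple_graph (V : finType) (e : rel V) : Prop :=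
  symmetric e /\ irreflexive e.

Definition induced_subgraph (V W : finType) (e : rel V) (f : rel W) : Prop :=
  exists h : V -> W, injective h /\ forall x y, e x y = f (h x) (h y).

Definition graph_family := forall V : finType, rel V -> Prop.

Definition induced_universal (F : graph_family) (W : finType) (f : rel W) : Prop :=
  simple_graph f /\ forall (V : finType) (e : rel V), F V e -> induced_subgraph e f.

Definition is_U (F : graph_family) (m : nat) : Prop :=
  (exists (W : finType) (f : rel W), induced_universal F f /\ #|W| = m) /\
  (forall (W : finType) (f : rel W), induced_universal F f -> m <= #|W|).

Definition clique_union_bounded (k : nat) (V : finType) (e : rel V) : Prop :=
  exists P : {set {set V}},
    partition P [set: V] /\
    (forall B, B \in P -> #|B| <= k) /\
    (forall x y, e x y = (x != y) && (pblock P x == pblock P y)).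

Definition K_family (n k : nat) : graph_family :=
  fun V e => simple_graph e /\ #|V| <= n /\ clique_union_bounded k e.

From mathcomp Require Import all_boot.
From Stdlib Require Import Reals Lra ClassicalEpsilon.
Set Implicit Arguments. Unset Strict Implicit. Unset Printing Implicit Defensive.

(* Upper bound: list the cliques of a graph of K_{n,k} by decreasing size; the
   j-th one has at most min(k, n/j) vertices, so the graph embeds into the
   disjoint union over j = 1..n of cliques of size min(k, n/j), which has
   sum_{i<=k} n/i vertices.
   Lower bound: a universal graph contains a copy of (n/i) K_i for every i <= k.
   For i = 1, ..., k in turn, pick in each clique of the i-th copy a vertex not
   picked before.  This is possible because every clique of every copy still
   contains at most i - 1 picked vertices: two vertices picked in distinct
   cliques of one copy are distinct and non-adjacent, so no clique of another
   copy contains both.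
   The logarithmic bound comes from n/i >= (n+1)/i - 1 and H_k >= ln (k+1). *)

Definition fibre_graph (V : finType) (X : eqType) (g : V -> X) : rel V :=
  fun x y => (x != y) && (g x == g y).

Section FibreGraph.
Variables (V : finType) (X : eqType) (g : V -> X).

Lemma fibre_graph_simple : simple_graph (fibre_graph g).
Proof.
split=> [x y | x]; last by rewrite /fibre_graph eqxx.
by rewrite /fibre_graph eq_sym [g x == _]eq_sym.
Qed.

Lemma fibre_graph_clique_union_bounded (k : nat) :
  (forall x, #|[set y | g x == g y]| <= k) ->
  clique_union_bounded k (fibre_graph g).
Proof.
move=> fibre_le.
have eqR : {in [set: V] & &, equivalence_rel (fun x y => g x == g y)}.
  by move=> x y z _ _ _; split=> [|/eqP ->].
have partP := preim_partitionP g [set: V].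
exists (preim_partition g [set: V]); split=> //; split.
  move=> _ /imsetP[x _ ->].
  by apply: leq_trans (fibre_le x); apply: subset_leq_card; apply/subsetP => y; rewrite !inE.
move=> x y; congr andb.
rewrite eq_pblock ?(cover_partition partP) ?inE ?(partition_trivIset partP) //.
by rewrite pblock_equivalence_partition ?inE.
Qed.

Lemma fibre_graph_in_K_family (n k : nat) :
  #|V| <= n -> (forall x, #|[set y | g x == g y]| <= k) ->
  K_family n k (fibre_graph g).
Proof.
move=> cardV fibre_le; split; first exact: fibre_graph_simple.
by split; last exact: fibre_graph_clique_union_bounded.
Qed.

End FibreGraph.

Lemma induced_fibre_graph (V W : finType) (X Y : eqType) (e : rel V)
    (g : V -> X) (g' : W -> Y) (h : V -> W) :
  e =2 fibre_graph g -> injective h ->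
  (forall x y, (g' (h x) == g' (h y)) = (g x == g y)) ->
  induced_subgraph e (fibre_graph g').
Proof.
move=> eg h_inj hg; exists h; split=> // x y.
by rewrite eg /fibre_graph (inj_eq h_inj) hg.
Qed.

Definition disjoint_cliques (m c : nat) : rel ('I_m * 'I_c) := fibre_graph fst.
Arguments disjoint_cliques : clear implicits.

Lemma disjoint_cliques_in_K_family (n k m c : nat) :
  m * c <= n -> (0 < m -> c <= k) -> K_family n k (disjoint_cliques m c).
Proof.
move=> mc_le c_le; apply: fibre_graph_in_K_family; first by rewrite card_prod !card_ord.
move=> [a b] /=; apply: leq_trans (c_le (leq_ltn_trans (leq0n _) (ltn_ord a))).
have fibre_sub : [set y | a == y.1] \subset [set (a, y) | y : 'I_c].
  by apply/subsetP => -[a' y] /[!inE] /= /eqP <-; apply: imset_f.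
apply: leq_trans (subset_leq_card fibre_sub) _.
by apply: leq_trans (leq_imset_card _ _) _; rewrite card_ord.
Qed.

Section RankByWeight.
Variables (X : finType) (w : X -> nat).

(* A strict total order on X refining the order of weights. *)
Let key (B : X) := w B * #|X| + enum_rank B.

Let key_inj : injective key.
Proof.
move=> B1 B2 /(congr1 (modn^~ #|X|)).
rewrite !modnMDl !modn_small ?ltn_ord //.
by move/val_inj/enum_rank_inj.
Qed.

Let key_lt_weight B1 B2 : key B1 < key B2 -> w B1 <= w B2.
Proof.
rewrite /key => lt_key; rewrite leqNgt; apply/negP => lt_w.
have : w B2 * #|X| + enum_rank B2 < w B1 * #|X|.
  apply: leq_trans (_ : (w B2).+1 * #|X| <= _); last by rewrite leq_mul2r lt_w orbT.
  by rewrite mulSn [X in X < _]addnC ltn_add2r.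
by move=> /(ltn_trans lt_key); rewrite ltnNge leq_addr.
Qed.

Lemma exists_rank_by_weight (P : {set X}) :
  exists r : X -> nat, {in P &, injective r} /\
    forall B, B \in P -> (r B).+1 * w B <= \sum_(B' in P) w B'.
Proof.
pose above B := [set B' in P | key B < key B'].
exists (fun B => #|above B|); split.
  have rank_lt B1 B2 : B2 \in P -> key B1 < key B2 -> #|above B2| < #|above B1|.
    move=> PB2 lt12; apply: proper_card; apply/properP; split.
      by apply/subsetP => B; rewrite !inE => /andP[-> /(ltn_trans lt12)].
    by exists B2; rewrite !inE ?PB2 ?lt12 ?ltnn.
  move=> B1 B2 PB1 PB2 eq_rank.
  case: (ltngtP (key B1) (key B2)) => [/(rank_lt _ _ PB2)|/(rank_lt _ _ PB1)|/key_inj //];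
    by rewrite eq_rank ltnn.
move=> B PB.
have notin_above : B \notin above B by rewrite inE ltnn andbF.
have -> : #|above B|.+1 = #|B |: above B| by rewrite cardsU1 notin_above.
rewrite -sum_nat_const.
apply: (@leq_trans (\sum_(B' in B |: above B) w B')).
  by apply: leq_sum => B'; rewrite !inE => /predU1P[-> // | /andP[_ /key_lt_weight]].
apply: (sub_le_big leqnn (fun x y => leq_addr y x)) => B'.
by rewrite !inE => /predU1P[-> // | /andP[]].
Qed.

End RankByWeight.

(* Vertex (i, j) is the i-th vertex of the j-th clique, which thus has
   min(k, n/(j+1)) vertices. *)
Definition univ_vertex (n k : nat) := {x : 'I_k * 'I_n | x.2 < n %/ x.1.+1}.

Definition univ_adj (n k : nat) : rel (univ_vertex n k) :=
  fibre_graph (fun u : univ_vertex n k => (val u).2).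
Arguments univ_adj : clear implicits.

Lemma card_univ_vertex (n k : nat) :
  #|{: univ_vertex n k}| = \sum_(1 <= i < k.+1) (n %/ i).
Proof.
rewrite card_sig big_add1 /= big_mkord -sum1_card.
rewrite (eq_bigl (fun x : 'I_k * 'I_n => x.2 < n %/ x.1.+1)) //.
rewrite -(pair_big_dep xpredT (fun (i : 'I_k) (j : 'I_n) => j < n %/ i.+1) (fun _ _ => 1)) /=.
apply: eq_bigr => i _.
by rewrite -(big_ord_widen n (fun _ => 1)) ?leq_div // sum1_card card_ord.
Qed.

Lemma partition_graph_embeds_univ (n k : nat) (V : finType) (e : rel V) (P : {set {set V}}) :
  partition P [set: V] -> (forall B, B \in P -> #|B| <= k) -> #|V| <= n ->
  e =2 fibre_graph (pblock P) -> induced_subgraph e (univ_adj n k).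
Proof.
move=> partP block_le cardV eP.
have cover_V x : x \in cover P by rewrite (cover_partition partP) inE.
have [r [r_inj r_le]] := exists_rank_by_weight (fun B : {set V} => #|B|) P.
rewrite -(card_partition partP) cardsT in r_le.
have in_block x : x \in pblock P x by rewrite mem_pblock.
pose pos x := index x (enum (pblock P x)).
have pos_lt x : pos x < #|pblock P x| by rewrite cardE index_mem mem_enum in_block.
have pos_lt_k x : pos x < k := leq_trans (pos_lt x) (block_le _ (pblock_mem (cover_V x))).
have rank_lt x : r (pblock P x) < n %/ (pos x).+1.
  rewrite leq_divRL // (leq_trans _ cardV) // (leq_trans _ (r_le _ (pblock_mem (cover_V x)))) //.
  by rewrite leq_mul2l pos_lt orbT.
have rank_lt_n x : r (pblock P x) < n := leq_trans (rank_lt x) (leq_div _ _).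
pose h x : univ_vertex n k := exist _ (Ordinal (pos_lt_k x), Ordinal (rank_lt_n x)) (rank_lt x).
have same_block x y : (r (pblock P x) == r (pblock P y)) = (pblock P x == pblock P y).
  by apply/eqP/eqP => [/r_inj | -> //]; apply; apply: pblock_mem.
apply: (induced_fibre_graph (h := h)) => //.
move=> x y /(congr1 val) [eq_pos /eqP]; rewrite same_block => /eqP eq_block.
move: eq_pos; rewrite /pos eq_block; apply: (index_inj x);
  by rewrite mem_enum ?in_block // -eq_block in_block.
Qed.

Lemma univ_adj_universal (n k : nat) : induced_universal (K_family n k) (univ_adj n k).
Proof.
split; first exact: fibre_graph_simple.
by move=> V e [_ [cardV [P [partP [block_le eP]]]]]; apply: (partition_graph_embeds_univ partP).
Qed.

Section GreedyTransversal.
Variables (W : finType) (f : rel W) (m : nat -> nat) (Cl : nat -> nat -> {set W}).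
Hypothesis Cl_clique : forall i b, {in Cl i b &, forall w1 w2, w1 != w2 -> f w1 w2}.
Hypothesis Cl_anticomplete : forall j a1 a2 w1 w2,
  a1 != a2 -> w1 \in Cl j a1 -> w2 \in Cl j a2 -> (w1 != w2) && ~~ f w1 w2.
Hypothesis Cl_card : forall j a, a < m j -> j <= #|Cl j a|.

Lemma common_clique_same_index i j b a1 a2 w1 w2 :
  w1 \in Cl j a1 -> w2 \in Cl j a2 -> w1 \in Cl i b -> w2 \in Cl i b -> a1 = a2.
Proof.
move=> w1a1 w2a2 w1b w2b.
case: (eqVneq a1 a2) => // /Cl_anticomplete/(_ w1a1 w2a2)/andP[neq_w].
by rewrite (Cl_clique w1b w2b neq_w).
Qed.

Lemma greedy_step j (R : {set W}) :
  (forall a, a < m j -> #|Cl j a :&: R| < j) ->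
  exists N : {set W}, [/\ [disjoint N & R], #|N| = m j & forall i b, #|Cl i b :&: N| <= 1].
Proof.
move=> meet_lt.
have outside (a : 'I_(m j)) : exists w, w \in Cl j a :\: R.
  apply/set0Pn; rewrite -card_gt0 -(ltn_add2l #|Cl j a :&: R|) addn0.
  by rewrite cardsID (leq_trans (meet_lt _ (ltn_ord a)) (Cl_card (ltn_ord a))).
pose rep a := xchoose (outside a).
have rep_in a : (rep a \notin R) && (rep a \in Cl j a).
  by rewrite -in_setD; apply: xchooseP.
have rep_inj : injective rep.
  move=> a1 a2 eq_rep; apply: val_inj.
  have /andP[_ in1] := rep_in a1; have /andP[_ in2] := rep_in a2.
  by apply: (common_clique_same_index (i := j) (b := a2) in1 in2); rewrite ?eq_rep.
exists [set rep a | a in 'I_(m j)]; split.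
- rewrite disjoints_subset; apply/subsetP => _ /imsetP[a _ ->].
  by rewrite inE; case/andP: (rep_in a).
- by rewrite card_imset ?card_ord.
- move=> i b; apply/card_le1_eqP => w1 w2.
  move=> /setIP[w1b /imsetP[a1 _ def_w1]] /setIP[w2b /imsetP[a2 _ def_w2]].
  rewrite def_w1 def_w2 in w1b w2b *.
  have /andP[_ in1] := rep_in a1; have /andP[_ in2] := rep_in a2.
  by congr rep; apply: val_inj; apply: (common_clique_same_index in2 in1 w2b w1b).
Qed.

Lemma greedy_transversal t : exists R : {set W},
  #|R| = \sum_(1 <= j < t.+1) m j /\ forall i b, #|Cl i b :&: R| <= t.
Proof.
elim: t => [|t [R [cardR meetR]]].
  by exists set0; split=> [|i b]; rewrite ?setI0 cards0 ?big_geq.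
have [N [disNR cardN meetN]] := greedy_step (R := R) (j := t.+1) (fun a _ => meetR _ a).
exists (R :|: N); split.
  by rewrite big_nat_recr //= cardsU disjoint_setI0 1?disjoint_sym // cards0 subn0 cardR cardN.
move=> i b; rewrite setIUr -addn1.
exact: leq_trans (leq_card_setU _ _) (leq_add (meetR i b) (meetN i b)).
Qed.

End GreedyTransversal.

Section CliqueImage.
Variables (W : finType) (f : rel W) (m c : nat) (h : 'I_m * 'I_c -> W).
Hypothesis h_inj : injective h.
Hypothesis h_adj : forall x y, disjoint_cliques m c x y = f (h x) (h y).

Definition clique_image (a : nat) : {set W} := h @: [set x : 'I_m * 'I_c | x.1 == a :> nat].

Lemma clique_image_clique a :
  {in clique_image a &, forall w1 w2, w1 != w2 -> f w1 w2}.
Proof.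
move=> _ _ /imsetP[x /[!inE] /eqP xa ->] /imsetP[y /[!inE] /eqP ya ->] neq_h.
rewrite -h_adj /disjoint_cliques /fibre_graph -(inj_eq h_inj) neq_h.
by apply/eqP/val_inj; rewrite /= xa ya.
Qed.

Lemma clique_image_anticomplete a1 a2 w1 w2 :
  a1 != a2 -> w1 \in clique_image a1 -> w2 \in clique_image a2 ->
  (w1 != w2) && ~~ f w1 w2.
Proof.
move=> neq_a /imsetP[x /[!inE] /eqP xa ->] /imsetP[y /[!inE] /eqP ya ->].
have neq_xy1 : x.1 != y.1 by apply: contra_neq neq_a; rewrite -xa -ya => ->.
rewrite -h_adj (inj_eq h_inj) /disjoint_cliques /fibre_graph.
rewrite (negbTE neq_xy1) andbF andbT.
by apply: contra_neq neq_xy1 => ->.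
Qed.

Lemma card_clique_image a : a < m -> #|clique_image a| = c.
Proof.
move=> lt_a_m; rewrite /clique_image.
have -> : [set x : 'I_m * 'I_c | x.1 == a :> nat] = [set (Ordinal lt_a_m, y) | y : 'I_c].
  apply/setP => -[x y] /[!inE]; apply/eqP/imsetP => [/= xa | [y' _ [-> _]] //].
  by exists y => //; congr pair; apply: val_inj.
by rewrite !card_imset ?card_ord // => y1 y2 [].
Qed.

End CliqueImage.

Lemma universal_card_ge (n k : nat) (W : finType) (f : rel W) :
  induced_universal (K_family n k) f -> \sum_(1 <= i < k.+1) (n %/ i) <= #|W|.
Proof.
move=> [_ univ].
(* With m i = 0 for i > k, the graph (m i) K_i lies in the family for every i. *)
pose m i := if i <= k then n %/ i else 0.
have emb i : {h : 'I_(m i) * 'I_i -> W |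
    injective h /\ forall x y, disjoint_cliques (m i) i x y = f (h x) (h y)}.
  apply/constructive_indefinite_description/univ/disjoint_cliques_in_K_family;
    by rewrite /m; case: ifP => // _; apply: leq_divM.
pose Cl i := clique_image (sval (emb i)).
have h_inj i := proj1 (svalP (emb i)).
have h_adj i := proj2 (svalP (emb i)).
have Cl_clique i := clique_image_clique (h_inj i) (h_adj i).
have Cl_anticomplete i := clique_image_anticomplete (h_inj i) (h_adj i).
have Cl_card i a (lt_a : a < m i) : i <= #|Cl i a| by rewrite card_clique_image.
have [R [cardR _]] := greedy_transversal Cl_clique Cl_anticomplete Cl_card k.
suff -> : \sum_(1 <= i < k.+1) (n %/ i) = #|R| by apply: max_card.
by rewrite cardR; apply: eq_big_nat => i /andP[_]; rewrite /m ltnS => ->.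
Qed.

Lemma ln_1_add_le (u : R) : (-1 < u -> ln (1 + u) <= u)%R.
Proof.
move=> u_gtN1.
rewrite -[X in (_ <= X)%R](ln_exp u).
have [lt_exp | <-] := Rle_lt_or_eq_dec _ _ (exp_ineq1_le u); last exact: Rle_refl.
by apply/Rlt_le/ln_increasing => //; lra.
Qed.

Lemma ln_add1_sub_le (x : R) : (0 < x -> ln (x + 1) - ln x <= / x)%R.
Proof.
move=> x_gt0.
have invx_gt0 := Rinv_0_lt_compat _ x_gt0.
have -> : (x + 1 = x * (1 + / x))%R by field; lra.
rewrite ln_mult //; last by lra.
have /ln_1_add_le : (-1 < / x)%R by lra.
lra.
Qed.

Lemma INR_divn_ge (n i : nat) : 0 < i -> (INR n.+1 / INR i - 1 <= INR (n %/ i))%R.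
Proof.
move=> i_gt0.
have i_gt0R : (0 < INR i)%R by apply/lt_0_INR/ltP.
have : (INR n.+1 <= INR (n %/ i).+1 * INR i)%R.
  have : n < (n %/ i).+1 * i by rewrite -ltn_divLR.
  by move/leP/le_INR; rewrite mult_INR.
rewrite (S_INR (n %/ i)) => le_n1.
apply: (Rmult_le_reg_r (INR i)) => //.
have -> : ((INR n.+1 / INR i - 1) * INR i = INR n.+1 - INR i)%R by field; lra.
lra.
Qed.

Lemma sum_divn_ge_ln (n k : nat) :
  (INR n.+1 * ln (INR k.+1) - INR k <= INR (\sum_(1 <= i < k.+1) (n %/ i)))%R.
Proof.
elim: k => [|k IHk]; first by rewrite big_geq // ln_1; simpl; lra.
have -> : \sum_(1 <= i < k.+2) (n %/ i) = \sum_(1 <= i < k.+1) (n %/ i) + n %/ k.+1.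
  by rewrite big_nat_recr.
rewrite plus_INR.
have k1_gt0 : (0 < INR k.+1)%R by apply/lt_0_INR/ltP.
have := Rmult_le_compat_l _ _ _ (pos_INR n.+1) (ln_add1_sub_le k1_gt0).
rewrite -S_INR.
have := INR_divn_ge n (ltn0Sn k).
have := S_INR k.
rewrite /Rdiv.
lra.
Qed.

Theorem theorem1 (n k : nat) (hn : 0 < n) (hk : 0 < k) :
  is_U (K_family n k) (\sum_(1 <= i < k.+1) (n %/ i)) /\
  (INR (n.+1) * ln (INR (k.+1)) - INR k <= INR (\sum_(1 <= i < k.+1) (n %/ i)))%R.
Proof.
split; last exact: sum_divn_ge_ln.
split; last by move=> W f; apply: universal_card_ge.
exists (univ_vertex n k), (univ_adj n k).
by split; [apply: univ_adj_universal | apply: card_univ_vertex].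
Qed.
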